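(* Fix $\tau>0$ and real numbers $V_r,V_b$. The function $\tilde h:\mathcal S^\circ\to\mathbb R$, $$\tilde h(r,b)=r(\log r-1)+b(\log b-1)+rV_r+bV_b+\frac{\bar\alpha}{2}(r^2+2rb+b^2)+\tau(1-\bar\gamma\rho)(\log(1-\bar\gamma\rho)-1),\quad\rho=r+b,$$ is strictly convex and belongs to $C^2(\mathcal S^\circ)$. Its gradient $\tilde h':\mathcal S^\circ\to\mathbb R^2$ is invertible (a bijection onto $\mathbb R^2$), and the inverse of its Hessian $\tilde h''$ is uniformly bounded on $\mathcal S^\circ$.
   Context: $\epsilon>0$, $d\in\{2,3\}$, $\bar\alpha=\epsilon^d\,2(d-1)\pi/d$, $\bar\gamma=\epsilon^d\pi/d$. $\mathcal S=\{(r,b)\in\mathbb R^2: r\ge0,\ b\ge0,\ r+b\le1/\bar\gamma\}$ with interior $\mathcal S^\circ$. *)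

From Stdlib Require Import Reals.
Open Scope R_scope.

Definition alpha_bar (eps : R) (d : nat) : R := eps ^ d * (2 * (INR d - 1) * PI / INR d).
Definition gamma_bar (eps : R) (d : nat) : R := eps ^ d * PI / INR d.

Definition S_int (eps : R) (d : nat) (r b : R) : Prop :=
  0 < r /\ 0 < b /\ r + b < 1 / gamma_bar eps d.

Definition htilde (eps : R) (d : nat) (tau Vr Vb : R) (r b : R) : R :=
  let rho := r + b in
  r * (ln r - 1) + b * (ln b - 1) + r * Vr + b * Vb
  + alpha_bar eps d / 2 * (r ^ 2 + 2 * r * b + b ^ 2)
  + tau * (1 - gamma_bar eps d * rho) * (ln (1 - gamma_bar eps d * rho) - 1).

Definition strictly_convex_on (P : R -> R -> Prop) (f : R -> R -> R) : Prop :=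
  forall x1 y1 x2 y2 t, P x1 y1 -> P x2 y2 -> (x1 <> x2 \/ y1 <> y2) ->
    0 < t < 1 ->
    f (t * x1 + (1 - t) * x2) (t * y1 + (1 - t) * y2)
      < t * f x1 y1 + (1 - t) * f x2 y2.

Definition partial1 (f : R -> R -> R) (x y l : R) : Prop :=
  derivable_pt_lim (fun s => f s y) x l.
Definition partial2 (f : R -> R -> R) (x y l : R) : Prop :=
  derivable_pt_lim (fun s => f x s) y l.

Definition continuous2_at (f : R -> R -> R) (x y : R) : Prop :=
  forall e, 0 < e -> exists dl, 0 < dl /\
    forall x' y', Rabs (x' - x) < dl -> Rabs (y' - y) < dl ->
      Rabs (f x' y' - f x y) < e.

(* Writing e(x) = x (ln x - 1), the function is e(r) + e(b) + r Vr + b Vb + a rho^2 / 2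
   + tau e(1 - g rho): a sum of convex functions in which e(r) + e(b) is strictly convex.
   Its gradient is (ln r + Vr + F rho, ln b + Vb + F rho) with F rho = a rho - tau g ln (1 - g rho)
   nondecreasing.  Solving for the gradient value (u, v) forces r = e^(u - Vr - F rho) and
   b = e^(v - Vb - F rho), so rho must solve ln rho + F rho = ln (e^(u - Vr) + e^(v - Vb)); the
   left side increases strictly from -oo to +oo on (0, 1/g), which gives exactly one solution.
   The Hessian is diag(1/r, 1/b) + c [[1, 1], [1, 1]] with c = F' rho >= 0, and every entry of
   its inverse is bounded by r + b < 1/g. *)

From Stdlib Require Import Reals Lra Psatz.
From Coquelicot Require Import Coquelicot.
Open Scope R_scope.

Lemma continuity_pt_ball (f : R -> R) x : continuity_pt f x ->
  forall e, 0 < e -> exists dl, 0 < dl /\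
    forall x', Rabs (x' - x) < dl -> Rabs (f x' - f x) < e.
Proof.
  intros Hc e He. destruct (Hc e He) as [dl [Hdl H]]. exists dl; split; [lra|].
  intros x' Hx'. destruct (Req_dec x' x) as [->|Hne].
  - unfold Rminus; rewrite Rplus_opp_r, Rabs_R0; lra.
  - apply (H x'). split; [split; [exact I | auto] | exact Hx'].
Qed.

Lemma ex_derive_continuity_pt (f : R -> R) x : ex_derive f x -> continuity_pt f x.
Proof.
  intros H. apply continuity_pt_filterlim.
  apply (ex_derive_continuous (V := R_NormedModule)). exact H.
Qed.

Lemma continuous2_at_split (f : R -> R -> R) (A B C : R -> R) x y :
  (forall x y, f x y = A x + B y + C (x + y)) ->
  ex_derive A x -> ex_derive B y -> ex_derive C (x + y) -> continuous2_at f x y.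
Proof.
  intros Ef HA HB HC e He.
  destruct (continuity_pt_ball A x (ex_derive_continuity_pt _ _ HA) (e/3))
    as [d1 [Hd1 H1]]; [lra|].
  destruct (continuity_pt_ball B y (ex_derive_continuity_pt _ _ HB) (e/3))
    as [d2 [Hd2 H2]]; [lra|].
  destruct (continuity_pt_ball C (x + y) (ex_derive_continuity_pt _ _ HC) (e/3))
    as [d3 [Hd3 H3]]; [lra|].
  exists (Rmin d1 (Rmin d2 (d3/2))). split.
  { apply Rmin_pos; [lra | apply Rmin_pos; lra]. }
  intros x' y' Hx Hy.
  assert (Hm1 := Rmin_l d1 (Rmin d2 (d3/2))).
  assert (Hm2 := Rmin_r d1 (Rmin d2 (d3/2))).
  assert (Hm3 := Rmin_l d2 (d3/2)). assert (Hm4 := Rmin_r d2 (d3/2)).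
  specialize (H1 x' ltac:(lra)). specialize (H2 y' ltac:(lra)).
  assert (Hs : Rabs (x' + y' - (x + y)) < d3).
  { replace (x' + y' - (x + y)) with ((x' - x) + (y' - y)) by ring.
    eapply Rle_lt_trans; [apply Rabs_triang | lra]. }
  specialize (H3 _ Hs). rewrite !Ef.
  replace (A x' + B y' + C (x' + y') - (A x + B y + C (x + y)))
    with ((A x' - A x) + (B y' - B y) + (C (x' + y') - C (x + y))) by ring.
  eapply Rle_lt_trans; [apply Rabs_triang|].
  eapply Rle_lt_trans; [apply Rplus_le_compat_r; apply Rabs_triang | lra].
Qed.

Definition entropy (x : R) : R := x * (ln x - 1).

(* [1 + s <= e^s] at [s = ln (z / x)], strictly unless [s = 0]. *)
Lemma mul_ln_le x z : 0 < x -> 0 < z ->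
  x * ln z <= x * ln x + z - x /\ (x <> z -> x * ln z < x * ln x + z - x).
Proof.
  intros Hx Hz.
  assert (Eln : ln (z / x) = ln z - ln x) by (apply ln_div; lra).
  assert (Eexp : exp (ln (z / x)) = z / x)
    by (apply exp_ln; apply Rdiv_lt_0_compat; lra).
  assert (Ezx : x * (z / x) = z) by (field; lra).
  split.
  - assert (H := exp_ineq1_le (ln (z / x))). rewrite Eexp, Eln in H.
    apply Rmult_le_compat_l with (r := x) in H; lra.
  - intros Hne.
    assert (Hs : ln (z / x) <> 0).
    { intro H0. rewrite H0, exp_0 in Eexp. apply Hne.
      assert (x * 1 = x * (z / x)) by (rewrite Eexp; ring). lra. }
    assert (H := exp_ineq1 _ Hs). rewrite Eexp, Eln in H.
    apply Rmult_lt_compat_l with (r := x) in H; lra.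
Qed.

Lemma entropy_convex x y t : 0 < x -> 0 < y -> 0 < t < 1 ->
  entropy (t * x + (1 - t) * y) <= t * entropy x + (1 - t) * entropy y /\
  (x <> y -> entropy (t * x + (1 - t) * y) < t * entropy x + (1 - t) * entropy y).
Proof.
  intros Hx Hy Ht. set (z := t * x + (1 - t) * y).
  assert (Hz : 0 < z) by (unfold z; nra).
  destruct (mul_ln_le x z Hx Hz) as [Lx Sx].
  destruct (mul_ln_le y z Hy Hz) as [Ly _].
  assert (Ez : z * ln z = t * (x * ln z) + (1 - t) * (y * ln z)) by (unfold z; ring).
  assert (Ay := Rmult_le_compat_l (1 - t) _ _ ltac:(lra) Ly).
  unfold entropy. split.
  - assert (Ax := Rmult_le_compat_l t _ _ ltac:(lra) Lx). unfold z in *. nra.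
  - intros Hne.
    assert (Hxz : x <> z) by (unfold z; intro E; apply Hne; nra).
    assert (Ax := Rmult_lt_compat_l t _ _ ltac:(lra) (Sx Hxz)). unfold z in *. nra.
Qed.

Lemma inverse_diag_plus_rank_one_bound r b c : 0 < r -> 0 < b -> 0 <= c ->
  let det := (/ r + c) * (/ b + c) - c * c in
  0 < det /\ Rabs ((/ b + c) / det) <= r + b /\ Rabs (- c / det) <= r + b /\
  Rabs ((/ r + c) / det) <= r + b.
Proof.
  intros Hr Hb Hc det.
  assert (Edet : r * b * det = 1 + c * (r + b)) by (unfold det; field; lra).
  assert (Hdet : 0 < det) by (apply Rmult_lt_reg_l with (r * b); nra).
  assert (Hbound : forall N, Rabs N * (r * b) <= (r + b) * (1 + c * (r + b)) ->
                    Rabs (N / det) <= r + b).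
  { intros N HN. rewrite Rabs_div, (Rabs_pos_eq det); [| lra | lra].
    apply Rmult_le_reg_r with (r * b * det); [nra|].
    replace (Rabs N / det * (r * b * det)) with (Rabs N * (r * b)) by (field; lra). nra. }
  assert (0 <= c * (r * r + r * b + b * b)) by (apply Rmult_le_pos; nra).
  split; [exact Hdet|]. split; [|split]; apply Hbound.
  - rewrite Rabs_pos_eq by (assert (0 < / b) by (apply Rinv_0_lt_compat; lra); lra).
    replace ((/ b + c) * (r * b)) with (r + c * r * b) by (field; lra). nra.
  - rewrite Rabs_Ropp, Rabs_pos_eq by lra. nra.
  - rewrite Rabs_pos_eq by (assert (0 < / r) by (apply Rinv_0_lt_compat; lra); lra).
    replace ((/ r + c) * (r * b)) with (b + c * r * b) by (field; lra). nra.
Qed.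

Section FreeEnergy.

Variables a g tau Vr Vb : R.
Hypotheses (ha : 0 <= a) (hg : 0 < g) (htau : 0 < tau).

Definition free_energy (r b : R) : R :=
  let rho := r + b in
  r * (ln r - 1) + b * (ln b - 1) + r * Vr + b * Vb
  + a / 2 * (r ^ 2 + 2 * r * b + b ^ 2)
  + tau * (1 - g * rho) * (ln (1 - g * rho) - 1).

Definition admissible (r b : R) : Prop := 0 < r /\ 0 < b /\ r + b < 1 / g.

Lemma vacancy_pos rho : rho < 1 / g -> 0 < 1 - g * rho.
Proof.
  intros H. assert (g * rho < g * (1 / g)) by (apply Rmult_lt_compat_l; lra).
  replace (g * (1 / g)) with 1 in H0 by (field; lra). lra.
Qed.

Lemma free_energy_entropy r b : free_energy r b =
  entropy r + entropy b + r * Vr + b * Vb + a / 2 * (r + b) ^ 2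
  + tau * entropy (1 - g * (r + b)).
Proof. unfold free_energy, entropy; simpl; ring. Qed.

Lemma free_energy_strictly_convex : strictly_convex_on admissible free_energy.
Proof.
  intros x1 y1 x2 y2 t [Px1 [Py1 Ps1]] [Px2 [Py2 Ps2]] Hne Ht. rewrite !free_energy_entropy.
  assert (Hw1 := vacancy_pos _ Ps1). assert (Hw2 := vacancy_pos _ Ps2).
  replace (1 - g * (t * x1 + (1 - t) * x2 + (t * y1 + (1 - t) * y2))) with
    (t * (1 - g * (x1 + y1)) + (1 - t) * (1 - g * (x2 + y2))) by ring.
  destruct (entropy_convex _ _ t Hw1 Hw2 Ht) as [Cw _].
  destruct (entropy_convex x1 x2 t Px1 Px2 Ht) as [Cx Sx].
  destruct (entropy_convex y1 y2 t Py1 Py2 Ht) as [Cy Sy].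
  assert (Tw := Rmult_le_compat_l tau _ _ ltac:(lra) Cw).
  (* convexity defect of the quadratic term *)
  assert (Cq : 0 <= a / 2 * (t * (1 - t)) * ((x1 + y1) - (x2 + y2)) ^ 2).
  { apply Rmult_le_pos; [apply Rmult_le_pos; nra | apply pow2_ge_0]. }
  destruct Hne as [Hne | Hne]; [specialize (Sx Hne) | specialize (Sy Hne)]; nra.
Qed.

Definition potential (rho : R) : R := a * rho - tau * g * ln (1 - g * rho).
Definition potential_deriv (rho : R) : R := a + tau * g * g / (1 - g * rho).

Definition grad1 (r b : R) : R := ln r + Vr + potential (r + b).
Definition grad2 (r b : R) : R := ln b + Vb + potential (r + b).
Definition hess11 (r b : R) : R := / r + potential_deriv (r + b).
Definition hess12 (r b : R) : R := potential_deriv (r + b).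
Definition hess22 (r b : R) : R := / b + potential_deriv (r + b).

Lemma free_energy_derivatives r b : admissible r b ->
  partial1 free_energy r b (grad1 r b) /\ partial2 free_energy r b (grad2 r b) /\
  partial1 grad1 r b (hess11 r b) /\ partial2 grad1 r b (hess12 r b) /\
  partial1 grad2 r b (hess12 r b) /\ partial2 grad2 r b (hess22 r b).
Proof.
  intros [Hr [Hb Hs]]. assert (Hw := vacancy_pos _ Hs).
  unfold partial1, partial2.
  repeat split; apply is_derive_Reals;
    unfold free_energy, grad1, grad2, hess11, hess12, hess22, potential, potential_deriv;
    auto_derive; solve [repeat split; lra | unfold Rminus in *; field; lra].
Qed.

Lemma free_energy_continuity r b : admissible r b ->
  continuous2_at free_energy r b /\ continuous2_at grad1 r b /\
  continuous2_at grad2 r b /\ continuous2_at hess11 r b /\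
  continuous2_at hess12 r b /\ continuous2_at hess22 r b.
Proof.
  intros [Hr [Hb Hs]]. assert (Hw := vacancy_pos _ Hs).
  repeat split.
  - apply (continuous2_at_split _ (fun s => entropy s + s * Vr) (fun s => entropy s + s * Vb)
      (fun s => a / 2 * s ^ 2 + tau * entropy (1 - g * s))).
    + intros x y; rewrite free_energy_entropy; ring.
    + unfold entropy; auto_derive; lra.
    + unfold entropy; auto_derive; lra.
    + unfold entropy; auto_derive; lra.
  - apply (continuous2_at_split _ (fun s => ln s + Vr) (fun _ => 0) potential).
    + intros x y; unfold grad1; ring.
    + auto_derive; lra.
    + auto_derive; auto.
    + unfold potential; auto_derive; lra.
  - apply (continuous2_at_split _ (fun _ => 0) (fun s => ln s + Vb) potential).
    + intros x y; unfold grad2; ring.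
    + auto_derive; auto.
    + auto_derive; lra.
    + unfold potential; auto_derive; lra.
  - apply (continuous2_at_split _ Rinv (fun _ => 0) potential_deriv).
    + intros x y; unfold hess11; ring.
    + auto_derive; lra.
    + auto_derive; auto.
    + unfold potential_deriv; auto_derive; lra.
  - apply (continuous2_at_split _ (fun _ => 0) (fun _ => 0) potential_deriv).
    + intros x y; unfold hess12; ring.
    + auto_derive; auto.
    + auto_derive; auto.
    + unfold potential_deriv; auto_derive; lra.
  - apply (continuous2_at_split _ (fun _ => 0) Rinv potential_deriv).
    + intros x y; unfold hess22; ring.
    + auto_derive; auto.
    + auto_derive; lra.
    + unfold potential_deriv; auto_derive; lra.
Qed.

Lemma potential_le x y : 0 <= x -> x <= y -> 0 < 1 - g * y -> potential x <= potential y.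
Proof.
  intros Hx Hxy Hy. unfold potential.
  assert (ln (1 - g * y) <= ln (1 - g * x)) by (apply ln_le; nra).
  assert (tau * g * ln (1 - g * y) <= tau * g * ln (1 - g * x))
    by (apply Rmult_le_compat_l; nra).
  nra.
Qed.

Lemma ln_add_potential_inj x y : 0 < x -> 0 < y -> 0 < 1 - g * x -> 0 < 1 - g * y ->
  ln x + potential x = ln y + potential y -> x = y.
Proof.
  intros Hx Hy Hgx Hgy E.
  destruct (Rtotal_order x y) as [Hl | [He | Hl]]; [exfalso | exact He | exfalso].
  - assert (ln x < ln y) by (apply ln_increasing; lra).
    assert (potential x <= potential y) by (apply potential_le; lra). lra.
  - assert (ln y < ln x) by (apply ln_increasing; lra).
    assert (potential y <= potential x) by (apply potential_le; lra). lra.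
Qed.

Lemma ln_add_potential_below K :
  exists x, 0 < x <= 1 / (2 * g) /\ ln x + potential x < K.
Proof.
  set (m := 1 / (2 * g)).
  assert (Hm : 0 < m) by (unfold m; apply Rdiv_lt_0_compat; lra).
  assert (Hgm : 0 < 1 - g * m) by (unfold m; field_simplify; lra).
  set (e := exp (K - potential m) / 2).
  assert (He : 0 < e) by (unfold e; generalize (exp_pos (K - potential m)); lra).
  exists (Rmin m e). assert (Hmin := Rmin_glb_lt _ _ _ Hm He).
  split; [split; [lra | apply Rmin_l]|].
  assert (ln (Rmin m e) < ln (exp (K - potential m))).
  { apply ln_increasing; [lra|]. assert (Rmin m e <= e) by apply Rmin_r. unfold e in *. lra. }
  rewrite ln_exp in H.
  assert (potential (Rmin m e) <= potential m) by (apply potential_le; [lra | apply Rmin_l | lra]).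
  lra.
Qed.

Lemma ln_add_potential_above K :
  exists x, 1 / (2 * g) <= x < 1 / g /\ K < ln x + potential x.
Proof.
  set (m := 1 / (2 * g)).
  assert (Hm : 0 < m) by (unfold m; apply Rdiv_lt_0_compat; lra).
  (* the vacancy [w = 1 - g x] is chosen so small that [- tau g ln w] exceeds [|K - ln m| + 1] *)
  set (E := exp (- (Rabs (K - ln m) + 1) / (tau * g))).
  set (w := Rmin (1 / 2) E).
  assert (Hw : 0 < w) by (apply Rmin_glb_lt; [lra | apply exp_pos]).
  assert (Hw2 : w <= 1 / 2) by apply Rmin_l.
  exists ((1 - w) / g).
  assert (Hgx : 1 - g * ((1 - w) / g) = w) by (field; lra).
  assert (Hmx : m <= (1 - w) / g).
  { unfold m. apply Rmult_le_reg_l with g; [lra|].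
    replace (g * (1 / (2 * g))) with (1 / 2) by (field; lra).
    replace (g * ((1 - w) / g)) with (1 - w) by (field; lra). lra. }
  split; [split; [exact Hmx|]|].
  { apply Rmult_lt_reg_l with g; [lra|].
    replace (g * ((1 - w) / g)) with (1 - w) by (field; lra).
    replace (g * (1 / g)) with 1 by (field; lra). lra. }
  assert (ln m <= ln ((1 - w) / g)) by (apply ln_le; lra).
  assert (Hln : tau * g * ln w <= - (Rabs (K - ln m) + 1)).
  { replace (- (Rabs (K - ln m) + 1)) with (tau * g * ln E)
      by (unfold E; rewrite ln_exp; field; nra).
    apply Rmult_le_compat_l; [nra | apply ln_le; [lra | apply Rmin_r]]. }
  assert (0 <= a * ((1 - w) / g)) by (apply Rmult_le_pos; lra).
  assert (K - ln m <= Rabs (K - ln m)) by apply RRle_abs.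
  unfold potential. rewrite Hgx. lra.
Qed.

Lemma ln_add_potential_surj K : exists z, 0 < z < 1 / g /\ ln z + potential z = K.
Proof.
  destruct (ln_add_potential_below K) as [x0 [Hx0 Hf0]].
  destruct (ln_add_potential_above K) as [x1 [Hx1 Hf1]].
  set (f := fun x => ln x + potential x - K).
  assert (Hcont : forall x, x0 <= x <= x1 -> continuity_pt f x).
  { intros x Hx. assert (0 < 1 - g * x) by (apply vacancy_pos; lra).
    apply ex_derive_continuity_pt. unfold f, potential. auto_derive. repeat split; lra. }
  assert (Hx01 : x0 < x1) by (destruct (Req_dec x0 x1); [subst; lra | lra]).
  destruct (Ranalysis5.IVT_interv f x0 x1 Hcont Hx01) as [z [Hz Ez]]; unfold f; [lra | lra |].
  exists z. unfold f in Ez. split; [lra | lra].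
Qed.

Lemma ln_add_potential_grad r b : admissible r b ->
  ln (r + b) + potential (r + b) = ln (exp (grad1 r b - Vr) + exp (grad2 r b - Vb)).
Proof.
  intros [Hr [Hb _]].
  assert (Esum : exp (grad1 r b - Vr) + exp (grad2 r b - Vb)
                 = (r + b) * exp (potential (r + b))).
  { unfold grad1, grad2.
    replace (ln r + Vr + potential (r + b) - Vr) with (ln r + potential (r + b)) by ring.
    replace (ln b + Vb + potential (r + b) - Vb) with (ln b + potential (r + b)) by ring.
    rewrite !exp_plus, !exp_ln by lra. ring. }
  rewrite Esum, ln_mult, ln_exp; [ring | lra | apply exp_pos].
Qed.

Lemma grad_bijective u v : exists r b, admissible r b /\ grad1 r b = u /\ grad2 r b = v /\
  forall r' b', admissible r' b' -> grad1 r' b' = u -> grad2 r' b' = v -> r' = r /\ b' = b.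
Proof.
  set (K := exp (u - Vr) + exp (v - Vb)).
  assert (HK : 0 < K) by (unfold K; generalize (exp_pos (u - Vr)) (exp_pos (v - Vb)); lra).
  destruct (ln_add_potential_surj (ln K)) as [z [[Hz0 Hz1] Ez]].
  set (r := exp (u - Vr - potential z)). set (b := exp (v - Vb - potential z)).
  assert (Hrb : r + b = z).
  { unfold r, b.
    replace (u - Vr - potential z) with (u - Vr + - potential z) by ring.
    replace (v - Vb - potential z) with (v - Vb + - potential z) by ring.
    rewrite !exp_plus.
    transitivity (exp (ln K + - potential z)); [rewrite exp_plus, exp_ln by lra; unfold K; ring|].
    replace (ln K + - potential z) with (ln z) by lra. apply exp_ln; lra. }
  assert (Hadm : admissible r b)
    by (split; [apply exp_pos | split; [apply exp_pos | rewrite Hrb; exact Hz1]]).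
  exists r, b. split; [exact Hadm | split; [| split]].
  - unfold grad1. rewrite Hrb. unfold r. rewrite ln_exp. ring.
  - unfold grad2. rewrite Hrb. unfold b. rewrite ln_exp. ring.
  - intros r' b' Hadm' E1 E2.
    assert (Hrho : r' + b' = z).
    { destruct Hadm' as [Hr' [Hb' Hs']].
      apply ln_add_potential_inj; try apply vacancy_pos; try lra.
      rewrite Ez, ln_add_potential_grad, E1, E2 by (repeat split; lra). reflexivity. }
    unfold grad1, grad2 in E1, E2. rewrite Hrho in E1, E2.
    destruct Hadm' as [Hr' [Hb' _]].
    split; apply ln_inv; unfold r, b; try apply exp_pos; try lra; rewrite ln_exp; lra.
Qed.

Lemma hessian_inverse_bound r b : admissible r b ->
  let det := hess11 r b * hess22 r b - hess12 r b * hess12 r b in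
  det <> 0 /\ Rabs (hess22 r b / det) <= 1 / g /\ Rabs (- hess12 r b / det) <= 1 / g /\
  Rabs (hess11 r b / det) <= 1 / g.
Proof.
  intros [Hr [Hb Hs]] det.
  assert (Hc : 0 <= potential_deriv (r + b)).
  { assert (Hw := vacancy_pos _ Hs). unfold potential_deriv.
    apply Rplus_le_le_0_compat; [lra|]. apply Rdiv_le_0_compat; [|lra].
    apply Rmult_le_pos; [apply Rmult_le_pos|]; lra. }
  destruct (inverse_diag_plus_rank_one_bound r b _ Hr Hb Hc) as [H0 [H1 [H2 H3]]].
  cbv zeta in H0, H1, H2, H3. unfold det, hess11, hess12, hess22.
  split; [intro; lra | repeat split; lra].
Qed.

End FreeEnergy.

Lemma gamma_bar_pos eps d : 0 < eps -> (1 <= d)%nat -> 0 < gamma_bar eps d.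
Proof.
  intros heps hd. apply le_INR in hd. simpl in hd. unfold gamma_bar.
  apply Rdiv_lt_0_compat; [apply Rmult_lt_0_compat; [apply pow_lt | apply PI_RGT_0] | ]; lra.
Qed.

Lemma alpha_bar_nonneg eps d : 0 < eps -> (1 <= d)%nat -> 0 <= alpha_bar eps d.
Proof.
  intros heps hd. apply le_INR in hd. simpl in hd. unfold alpha_bar.
  apply Rmult_le_pos; [left; apply pow_lt; lra|]. apply Rdiv_le_0_compat; [|lra].
  apply Rmult_le_pos; [lra | left; apply PI_RGT_0].
Qed.

Theorem lemma1 (eps : R) (d : nat) (tau Vr Vb : R)
  (heps : 0 < eps) (hd : d = 2%nat \/ d = 3%nat) (htau : 0 < tau) :
  let h := htilde eps d tau Vr Vb in
  let P := S_int eps d in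
  strictly_convex_on P h /\
  exists g1 g2 H11 H12 H21 H22 : R -> R -> R,
    (forall r b, P r b ->
       partial1 h r b (g1 r b) /\ partial2 h r b (g2 r b) /\
       partial1 g1 r b (H11 r b) /\ partial2 g1 r b (H12 r b) /\
       partial1 g2 r b (H21 r b) /\ partial2 g2 r b (H22 r b) /\
       continuous2_at h r b /\ continuous2_at g1 r b /\ continuous2_at g2 r b /\
       continuous2_at H11 r b /\ continuous2_at H12 r b /\
       continuous2_at H21 r b /\ continuous2_at H22 r b) /\
    (forall u v, exists r b, P r b /\ g1 r b = u /\ g2 r b = v /\
       forall r' b', P r' b' -> g1 r' b' = u -> g2 r' b' = v -> r' = r /\ b' = b) /\
    (exists M, forall r b, P r b ->
       let det := H11 r b * H22 r b - H12 r b * H21 r b in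
       det <> 0 /\
       Rabs (H22 r b / det) <= M /\ Rabs (- H12 r b / det) <= M /\
       Rabs (- H21 r b / det) <= M /\ Rabs (H11 r b / det) <= M).
Proof.
  intros h P.
  assert (hd1 : (1 <= d)%nat) by (destruct hd; subst; auto).
  assert (ha := alpha_bar_nonneg eps d heps hd1).
  assert (hg := gamma_bar_pos eps d heps hd1).
  set (a := alpha_bar eps d) in *. set (g := gamma_bar eps d) in *.
  split; [exact (free_energy_strictly_convex a g tau Vr Vb ha hg htau)|].
  exists (grad1 a g tau Vr), (grad2 a g tau Vb),
    (hess11 a g tau), (hess12 a g tau), (hess12 a g tau), (hess22 a g tau).
  split; [|split].
  - intros r b HP.
    destruct (free_energy_derivatives a g tau Vr Vb hg r b HP) as [D1 [D2 [D3 [D4 [D5 D6]]]]].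
    destruct (free_energy_continuity a g tau Vr Vb hg r b HP) as [C1 [C2 [C3 [C4 [C5 C6]]]]].
    tauto.
  - exact (grad_bijective a g tau Vr Vb ha hg htau).
  - exists (1 / g). intros r b HP.
    destruct (hessian_inverse_bound a g tau ha hg htau r b HP) as [Hdet [B22 [B12 B11]]].
    tauto.
Qed.
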